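(* In any Poisson $H$-pseudoalgebra $V$ the right Leibniz rule holds: $[ab*c]=a[b*c]+(-1)^{p(a)p(b)}b[a*c]$ for all $a,b,c\in V$.
   Context: $H$ is a cocommutative Hopf algebra over a field $\mathbb F$ of characteristic $0$ (purely even), coproduct $\Delta(h)=h_{(1)}\otimes h_{(2)}$, antipode $S$, $h_{(1)}\otimes h_{(-2)}:=(\mathrm{id}\otimes S)\Delta(h)$, iterated coproduct $h_{(1)}\otimes h_{(2)}\otimes h_{(3)}$. $H^{\otimes r}$ is a right $H$-module via $(h_1\otimes\dots\otimes h_r)h=h_1h_{(1)}\otimes\dots\otimes h_rh_{(r)}$ and $H^{\otimes r}\otimes_H L$ the corresponding tensor product. A Lie $H$-pseudoalgebra is a vector superspace $L$ (parity $p$) with a left $H$-module structure and an even linear map $L\otimes L\to(H\otimes H)\otimes_HL$, $a\otimes b\mapsto[a*b]$, such that for $a,b,c\in L$, $f,g\in H$, $\sigma=(12)$: $[fa*gb]=((f\otimes g)\otimes_H1)[a*b]$; $[b*a]=-(-1)^{p(a)p(b)}(\sigma\otimes_H\mathrm{id})[a*b]$; and $[a*[b*c]]-(-1)^{p(a)p(b)}((\sigma\otimes\mathrm{id})\otimes_H\mathrm{id})[b*[a*c]]=[[a*b]*c]$ in $H^{\otimes3}\otimes_HL$, where, if $[a*b]=\sum_i(f_i\otimes g_i)\otimes_He_i$ and $[e_i*c]=\sum_j(f_{ij}\otimes g_{ij})\otimes_He_{ij}$, then $[[a*b]*c]=\sum_{i,j}(f_if_{ij(1)}\otimes g_if_{ij(2)}\otimes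 g_{ij})\otimes_He_{ij}$, and if $[b*c]=\sum_i(h_i\otimes l_i)\otimes_Hd_i$, $[a*d_i]=\sum_j(h_{ij}\otimes l_{ij})\otimes_Hd_{ij}$, then $[a*[b*c]]=\sum_{i,j}(h_{ij}\otimes h_il_{ij(1)}\otimes l_il_{ij(2)})\otimes_Hd_{ij}$. A Poisson $H$-pseudoalgebra is a Lie $H$-pseudoalgebra $V$ with an even supercommutative associative product $V\otimes V\to V$ such that $h(ab)=(h_{(1)}a)(h_{(2)}b)$ and $[a*bc]=[a*b]c+(-1)^{p(b)p(c)}[a*c]b$, where for $[a*b]=\sum_i(f_i\otimes g_i)\otimes_He_i$ one sets $[a*b]c:=\sum_i(f_i\otimes g_{i(1)})\otimes_He_i(g_{i(-2)}c)$ (well defined). Similarly, for $[b*c]=\sum_i(h_i\otimes l_i)\otimes_Hd_i$, $a[b*c]:=\sum_i(h_{i(1)}\otimes l_i)\otimes_H(h_{i(-2)}a)d_i$. *)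

From HB Require Import structures.
From mathcomp Require Import all_boot all_order all_algebra.
From Stdlib Require List.
Set Implicit Arguments. Unset Strict Implicit. Unset Printing Implicit Defensive.
Import GRing.Theory.
Local Open Scope ring_scope.

(* An element of a tensor product is represented by a finite formal sum     *)
(* (a list) of pure tensors; scalars and signs are absorbed into the first    *)
(* tensor factor.  Two formal sums denote the same element iff they are       *)
(* related by the smallest commutative-monoid congruence containing the        *)
(* defining relations of the tensor product.                                  *)

Section Formal.
Variable T : Type.
Variable R : seq T -> seq T -> Prop.
Inductive fcong : seq T -> seq T -> Prop :=
| fc_rel s t : R s t -> fcong s t
| fc_refl s : fcong s s
| fc_sym s t : fcong s t -> fcong t s
| fc_trans s t u : fcong s t -> fcong t u -> fcong s u
| fc_comm s t : fcong (s ++ t) (t ++ s)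
| fc_cat s1 s2 t1 t2 : fcong s1 t1 -> fcong s2 t2 -> fcong (s1 ++ s2) (t1 ++ t2).
End Formal.

Section Tensors.
Variable F : fieldType.

Inductive relHH (H : lmodType F) : seq (H * H) -> seq (H * H) -> Prop :=
| rHH_add1 x y b : relHH [:: (x + y, b)] [:: (x, b); (y, b)]
| rHH_add2 a x y : relHH [:: (a, x + y)] [:: (a, x); (a, y)]
| rHH_sc2 (k : F) a b : relHH [:: (k *: a, b)] [:: (a, k *: b)]
| rHH_zero1 b : relHH [:: (0, b)] [::].

Inductive relHHH (H : lmodType F) : seq (H * H * H) -> seq (H * H * H) -> Prop :=
| rHHH_add1 x y b c : relHHH [:: (x + y, b, c)] [:: (x, b, c); (y, b, c)]
| rHHH_add2 a x y c : relHHH [:: (a, x + y, c)] [:: (a, x, c); (a, y, c)]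
| rHHH_add3 a b x y : relHHH [:: (a, b, x + y)] [:: (a, b, x); (a, b, y)]
| rHHH_sc2 (k : F) a b c : relHHH [:: (k *: a, b, c)] [:: (a, k *: b, c)]
| rHHH_sc3 (k : F) a b c : relHHH [:: (k *: a, b, c)] [:: (a, b, k *: c)]
| rHHH_zero1 b c : relHHH [:: (0, b, c)] [::].

Variables (H : algType F) (V : lmodType F).
Variable cop : H -> seq (H * H).
Variable act : H -> V -> V.

Definition cop3 (h : H) : seq (H * H * H) :=
  flatten [seq [seq (y.1, y.2, x.2) | y <- cop x.1] | x <- cop h].

(* (H (x) H) (x)_H V, pure tensors (f, g, e) = (f (x) g) (x)_H e;
   right H-action on H (x) H: (f (x) g) h = f h_(1) (x) g h_(2). *)
Inductive relT2 : seq (H * H * V) -> seq (H * H * V) -> Prop :=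
| r2_add1 x y g e : relT2 [:: (x + y, g, e)] [:: (x, g, e); (y, g, e)]
| r2_add2 f x y e : relT2 [:: (f, x + y, e)] [:: (f, x, e); (f, y, e)]
| r2_add3 f g x y : relT2 [:: (f, g, x + y)] [:: (f, g, x); (f, g, y)]
| r2_sc2 (k : F) f g e : relT2 [:: (k *: f, g, e)] [:: (f, k *: g, e)]
| r2_sc3 (k : F) f g e : relT2 [:: (k *: f, g, e)] [:: (f, g, k *: e)]
| r2_zero1 g e : relT2 [:: (0, g, e)] [::]
| r2_bal f g h e :
    relT2 [seq (f * x.1, g * x.2, e) | x <- cop h] [:: (f, g, act h e)].

(* (H (x) H (x) H) (x)_H V, pure tensors (f, g, k, e);
   right H-action: (f (x) g (x) k) h = f h_(1) (x) g h_(2) (x) k h_(3). *)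
Inductive relT3 : seq (H * H * H * V) -> seq (H * H * H * V) -> Prop :=
| r3_add1 x y g k e : relT3 [:: (x + y, g, k, e)] [:: (x, g, k, e); (y, g, k, e)]
| r3_add2 f x y k e : relT3 [:: (f, x + y, k, e)] [:: (f, x, k, e); (f, y, k, e)]
| r3_add3 f g x y e : relT3 [:: (f, g, x + y, e)] [:: (f, g, x, e); (f, g, y, e)]
| r3_add4 f g k x y : relT3 [:: (f, g, k, x + y)] [:: (f, g, k, x); (f, g, k, y)]
| r3_sc2 (c : F) f g k e : relT3 [:: (c *: f, g, k, e)] [:: (f, c *: g, k, e)]
| r3_sc3 (c : F) f g k e : relT3 [:: (c *: f, g, k, e)] [:: (f, g, c *: k, e)]
| r3_sc4 (c : F) f g k e : relT3 [:: (c *: f, g, k, e)] [:: (f, g, k, c *: e)]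
| r3_zero1 g k e : relT3 [:: (0, g, k, e)] [::]
| r3_bal f g k h e :
    relT3 [seq (f * x.1.1, g * x.1.2, k * x.2, e) | x <- cop3 h]
          [:: (f, g, k, act h e)].

Definition scaleT2 (c : F) (s : seq (H * H * V)) : seq (H * H * V) :=
  [seq (c *: t.1.1, t.1.2, t.2) | t <- s].
Definition scaleT3 (c : F) (s : seq (H * H * H * V)) : seq (H * H * H * V) :=
  [seq (c *: t.1.1.1, t.1.1.2, t.1.2, t.2) | t <- s].

Definition swapT2 (s : seq (H * H * V)) : seq (H * H * V) :=
  [seq (t.1.2, t.1.1, t.2) | t <- s].
Definition swap12T3 (s : seq (H * H * H * V)) : seq (H * H * H * V) :=
  [seq (t.1.1.2, t.1.1.1, t.1.2, t.2) | t <- s].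

Variable ant : H -> H.
Variable pmul : V -> V -> V.
Variable br : V -> V -> seq (H * H * V).

(* [a*b]c := sum (f_i (x) g_i(1)) (x)_H e_i (g_i(-2) c) *)
Definition rmulT (s : seq (H * H * V)) (c : V) : seq (H * H * V) :=
  flatten [seq [seq (t.1.1, x.1, pmul t.2 (act (ant x.2) c)) | x <- cop t.1.2]
          | t <- s].
(* a[b*c] := sum (h_i(1) (x) l_i) (x)_H (h_i(-2) a) d_i *)
Definition lmulT (a : V) (s : seq (H * H * V)) : seq (H * H * V) :=
  flatten [seq [seq (x.1, t.1.2, pmul (act (ant x.2) a) t.2) | x <- cop t.1.1]
          | t <- s].

(* [a*[b*c]] where s represents [b*c] *)
Definition brL (a : V) (s : seq (H * H * V)) : seq (H * H * H * V) :=
  flatten [seq flatten [seq [seq (u.1.1, t.1.1 * x.1, t.1.2 * x.2, u.2)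
                            | x <- cop u.1.2]
                       | u <- br a t.2]
          | t <- s].
(* [[a*b]*c] where s represents [a*b] *)
Definition brR (s : seq (H * H * V)) (c : V) : seq (H * H * H * V) :=
  flatten [seq flatten [seq [seq (t.1.1 * x.1, t.1.2 * x.2, u.1.2, u.2)
                            | x <- cop u.1.1]
                       | u <- br t.2 c]
          | t <- s].

End Tensors.

Record cocomHopf (F : fieldType) (H : algType F) := CocomHopf {
  cop : H -> seq (H * H);
  cou : H -> F;
  ant : H -> H;
  cop_add : forall h k, fcong (@relHH F H) (cop (h + k)) (cop h ++ cop k);
  cop_scale : forall (c : F) h,
    fcong (@relHH F H) (cop (c *: h)) [seq (c *: x.1, x.2) | x <- cop h];
  cop_mul : forall h k, fcong (@relHH F H) (cop (h * k))
    (flatten [seq [seq (x.1 * y.1, x.2 * y.2) | y <- cop k] | x <- cop h]);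
  cop_one : fcong (@relHH F H) (cop 1) [:: (1, 1)];
  cop_coass : forall h, fcong (@relHHH F H)
    (flatten [seq [seq (y.1, y.2, x.2) | y <- cop x.1] | x <- cop h])
    (flatten [seq [seq (x.1, y.1, y.2) | y <- cop x.2] | x <- cop h]);
  cou_add : forall h k, cou (h + k) = cou h + cou k;
  cou_scale : forall (c : F) h, cou (c *: h) = c * cou h;
  cou_mul : forall h k, cou (h * k) = cou h * cou k;
  cou_one : cou 1 = 1;
  counit_l : forall h, \sum_(x <- cop h) cou x.1 *: x.2 = h;
  counit_r : forall h, \sum_(x <- cop h) cou x.2 *: x.1 = h;
  ant_add : forall h k, ant (h + k) = ant h + ant k;
  ant_scale : forall (c : F) h, ant (c *: h) = c *: ant h;
  antipode_l : forall h, \sum_(x <- cop h) ant x.1 * x.2 = cou h *: 1;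
  antipode_r : forall h, \sum_(x <- cop h) x.1 * ant x.2 = cou h *: 1;
  cocomm : forall h, fcong (@relHH F H) (cop h) [seq (x.2, x.1) | x <- cop h]
}.

(* par i v  <->  v is homogeneous of parity i (false = even, true = odd).     *)
Record poissonPseudo (F : fieldType) (H : algType F) (HD : cocomHopf H)
    (V : lmodType F) := PoissonPseudo {
  par : bool -> V -> Prop;
  act : H -> V -> V;
  br : V -> V -> seq (H * H * V);
  pmul : V -> V -> V;
  par0 : forall i, par i 0;
  parD : forall i u v, par i u -> par i v -> par i (u + v);
  parZ : forall i (k : F) v, par i v -> par i (k *: v);
  par_decomp : forall v, exists v0 v1, [/\ par false v0, par true v1 & v = v0 + v1];
  par_disj : forall v, par false v -> par true v -> v = 0;
  (* left H-module (H purely even, so the action preserves parity) *)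
  act_addl : forall h k v, act (h + k) v = act h v + act k v;
  act_scalel : forall (c : F) h v, act (c *: h) v = c *: act h v;
  act_addr : forall h u v, act h (u + v) = act h u + act h v;
  act_scaler : forall (c : F) h v, act h (c *: v) = c *: act h v;
  act_one : forall v, act 1 v = v;
  act_mul : forall h k v, act (h * k) v = act h (act k v);
  act_par : forall i h v, par i v -> par i (act h v);
  br_addl : forall a a' b,
    fcong (relT2 (cop HD) act) (br (a + a') b) (br a b ++ br a' b);
  br_addr : forall a b b',
    fcong (relT2 (cop HD) act) (br a (b + b')) (br a b ++ br a b');
  br_even : forall i j a b, par i a -> par j b ->
    exists s, fcong (relT2 (cop HD) act) (br a b) s /\
              (forall t, List.In t s -> par (addb i j) t.2);
  br_sesq : forall f g a b,
    fcong (relT2 (cop HD) act) (br (act f a) (act g b))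
          [seq (f * t.1.1, g * t.1.2, t.2) | t <- br a b];
  br_skew : forall i j a b, par i a -> par j b ->
    fcong (relT2 (cop HD) act) (br b a)
          (scaleT2 (- (-1) ^+ (i && j)) (swapT2 (br a b)));
  br_jacobi : forall i j k a b c, par i a -> par j b -> par k c ->
    fcong (relT3 (cop HD) act)
          (brL (cop HD) br a (br b c) ++
           scaleT3 (- (-1) ^+ (i && j)) (swap12T3 (brL (cop HD) br b (br a c))))
          (brR (cop HD) br (br a b) c);
  pmul_addl : forall a a' b, pmul (a + a') b = pmul a b + pmul a' b;
  pmul_addr : forall a b b', pmul a (b + b') = pmul a b + pmul a b';
  pmul_scalel : forall (k : F) a b, pmul (k *: a) b = k *: pmul a b;
  pmul_scaler : forall (k : F) a b, pmul a (k *: b) = k *: pmul a b;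
  pmul_assoc : forall a b c, pmul a (pmul b c) = pmul (pmul a b) c;
  pmul_par : forall i j a b, par i a -> par j b -> par (addb i j) (pmul a b);
  pmul_supercomm : forall i j a b, par i a -> par j b ->
    pmul a b = (-1) ^+ (i && j) *: pmul b a;
  act_pmul : forall h a b,
    act h (pmul a b) = \sum_(x <- cop HD h) pmul (act x.1 a) (act x.2 b);
  br_leibniz : forall i j k a b c, par i a -> par j b -> par k c ->
    fcong (relT2 (cop HD) act) (br a (pmul b c))
          (rmulT (cop HD) act (ant HD) pmul (br a b) c ++
           scaleT2 ((-1) ^+ (j && k)) (rmulT (cop HD) act (ant HD) pmul (br a c) b))
}.

From HB Require Import structures.
From mathcomp Require Import all_boot all_order all_algebra.
From mathcomp Require Import ring.
Import GRing.Theory.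
Local Open Scope ring_scope.
Set Implicit Arguments. Unset Strict Implicit.

(* By skew-symmetry [ab*c] is -(-1)^{p(c)(p(a)+p(b))} σ[c*ab], and the left Leibniz
   rule splits [c*ab] into [c*a]b and [c*b]a.  Skew-symmetry again writes [c*a] as a
   multiple of σ[a*c], and σ((σ[a*c]) b) is b[a*c] up to the Koszul sign
   (-1)^{(p(a)+p(c))p(b)} produced by supercommutativity; the signs combine to those of
   the claim.  An inhomogeneous c is split into its even and odd parts.
   Everything happens in (H ⊗ H) ⊗_H V, so the real work is to see that x ↦ x c and
   x ↦ a x respect the defining relations of this tensor product.  For the H-balancing
   relation this uses Δ(gh) = Δ(g)Δ(h), S(gh) = S(h)S(g), coassociativity and the
   identity Σ h_(1)(e (S(h_(2)) w)) = (h e) w. *)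

Section FormalSums.
Variables (T : Type) (R : seq T -> seq T -> Prop).
Local Notation "s ≈ t" := (fcong R s t) (at level 70).

Lemma fcong_eq s t : s = t -> s ≈ t.
Proof. by move->; apply: fc_refl. Qed.

Lemma fcong_flatten_map (U : Type) (f g : U -> seq T) (s : seq U) :
  (forall x, f x ≈ g x) -> flatten (map f s) ≈ flatten (map g s).
Proof.
by move=> fg; elim: s => [|x s IH] /=; [apply: fc_refl | apply: fc_cat].
Qed.

Lemma fcong_map (U : Type) (f g : U -> T) (s : seq U) :
  (forall x, [:: f x] ≈ [:: g x]) -> map f s ≈ map g s.
Proof.
by move=> fg; rewrite -(flatten_map1 f) -(flatten_map1 g); apply: fcong_flatten_map.
Qed.

Lemma fcong_map_flatten (U : Type) (f : U -> T) (g : U -> seq T) (s : seq U) :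
  (forall x, [:: f x] ≈ g x) -> map f s ≈ flatten (map g s).
Proof. by move=> fg; rewrite -flatten_map1; apply: fcong_flatten_map. Qed.

Lemma fcong_lift (T' : Type) (R' : seq T' -> seq T' -> Prop) (f : T' -> seq T) :
  (forall s t, R' s t -> flatten (map f s) ≈ flatten (map f t)) ->
  forall s t, fcong R' s t -> flatten (map f s) ≈ flatten (map f t).
Proof.
move=> fR s t; elim=> {s t} [s t /fR //|s|s t _|s t u _ st _ tu|s t|s1 s2 t1 t2 _ st1 _ st2].
- exact: fc_refl.
- exact: fc_sym.
- exact: fc_trans st tu.
- by rewrite !map_cat !flatten_cat; apply: fc_comm.
- by rewrite !map_cat !flatten_cat; apply: fc_cat.
Qed.

Lemma fcong_lift_map (T' : Type) (R' : seq T' -> seq T' -> Prop) (f : T' -> T) :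
  (forall s t, R' s t -> map f s ≈ map f t) ->
  forall s t, fcong R' s t -> map f s ≈ map f t.
Proof.
move=> fR s t; rewrite -!(flatten_map1 f); apply: fcong_lift => {}s {}t.
by rewrite !flatten_map1; apply: fR.
Qed.

End FormalSums.

Lemma fcong_perm (T : eqType) (R : seq T -> seq T -> Prop) (s t : seq T) :
  perm_eq s t -> fcong R s t.
Proof.
elim: s t => [|x s IH] t st.
  by move: st; rewrite perm_sym => /perm_nilP ->; apply: fc_refl.
have xt : x \in t by rewrite -(perm_mem st) mem_head.
case/splitPr: xt st => t1 t2.
rewrite -[x :: t2]cat1s perm_sym perm_catCA /= perm_cons perm_sym => /IH st.
apply: fc_trans (fc_cat (fc_refl R [:: x]) st) _.
by rewrite catA -cat1s -[_ :: t2]cat1s catA; apply: fc_cat (fc_comm _ _ _) (fc_refl _ _).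
Qed.

Section Permutations.
Variable T : eqType.

Lemma perm_flatten_pair (U : Type) (A B : U -> T) (s : seq U) :
  perm_eq (flatten [seq [:: A z; B z] | z <- s]) (map A s ++ map B s).
Proof.
elim: s => //= z s IH; rewrite perm_cons -[B z :: map B s]cat1s perm_sym.
by rewrite perm_catCA /= perm_cons perm_sym.
Qed.

Lemma perm_flatten_map_cat (U : Type) (A B : U -> seq T) (s : seq U) :
  perm_eq (flatten [seq A z ++ B z | z <- s])
          (flatten (map A s) ++ flatten (map B s)).
Proof.
elim: s => //= z s IH.
by rewrite -!catA perm_cat2l perm_sym perm_catCA perm_cat2l perm_sym.
Qed.

Lemma perm_flatten_exchange (U W : Type) (G : U -> W -> seq T) s t :
  perm_eq (flatten [seq flatten [seq G x y | y <- t] | x <- s])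
          (flatten [seq flatten [seq G x y | x <- s] | y <- t]).
Proof.
elim: s => [|x s IH] /=; first by elim: t.
rewrite perm_sym (permPl (perm_flatten_map_cat _ _ _)) perm_cat2l perm_sym.
exact: IH.
Qed.

End Permutations.

Section BalancedSums.
Variables (F : fieldType) (H : lmodType F) (M : zmodType).

Definition balanced2 (phi : H * H -> M) :=
  [/\ forall x y b, phi (x + y, b) = phi (x, b) + phi (y, b),
      forall a x y, phi (a, x + y) = phi (a, x) + phi (a, y) &
      forall (k : F) a b, phi (k *: a, b) = phi (a, k *: b)].

Definition balanced3 (phi : H * H * H -> M) :=
  [/\ forall x y b c, phi (x + y, b, c) = phi (x, b, c) + phi (y, b, c),
      forall a x y c, phi (a, x + y, c) = phi (a, x, c) + phi (a, y, c),
      forall a b x y, phi (a, b, x + y) = phi (a, b, x) + phi (a, b, y),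
      forall (k : F) a b c, phi (k *: a, b, c) = phi (a, k *: b, c) &
      forall (k : F) a b c, phi (k *: a, b, c) = phi (a, b, k *: c)].

Lemma balanced3_sum (I : Type) (r : seq I) (phi : I -> H * H * H -> M) :
  (forall i, balanced3 (phi i)) -> balanced3 (fun t => \sum_(i <- r) phi i t).
Proof.
move=> phiB; split=> * /=; rewrite -?big_split; apply: eq_bigr => i _;
  case: (phiB i) => D1 D2 D3 Z2 Z3;
  by [apply: D1 | apply: D2 | apply: D3 | apply: Z2 | apply: Z3].
Qed.

Lemma eq_big_fcongHH (phi : H * H -> M) s t :
  balanced2 phi -> fcong (@relHH F H) s t -> \sum_(x <- s) phi x = \sum_(x <- t) phi x.
Proof.
case=> D1 D2 Z; elim=> {s t} [s t [x y b|a x y|k a b|b]|//|s t _ ->|s t u _ -> _ ->|s t|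
                               s1 s2 t1 t2 _ e1 _ e2];
  rewrite ?big_cat ?big_cons ?big_nil ?addr0 //=.
- by apply: (@addrI _ (phi (0, b))); rewrite -D1 !addr0.
- exact: addrC.
- by rewrite e1 e2.
Qed.

Lemma eq_big_fcongHHH (phi : H * H * H -> M) s t :
  balanced3 phi -> fcong (@relHHH F H) s t -> \sum_(x <- s) phi x = \sum_(x <- t) phi x.
Proof.
case=> D1 D2 D3 Z2 Z3;
  elim=> {s t} [s t [x y b c|a x y c|a b x y|k a b c|k a b c|b c]|//|s t _ ->|
                s t u _ -> _ ->|s t|s1 s2 t1 t2 _ e1 _ e2];
  rewrite ?big_cat ?big_cons ?big_nil ?addr0 //=.
- by apply: (@addrI _ (phi (0, b, c))); rewrite -D1 !addr0.
- exact: addrC.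
- by rewrite e1 e2.
Qed.

End BalancedSums.

Section HopfSums.
Variables (F : fieldType) (H : algType F) (HD : cocomHopf H) (M : zmodType).
Local Notation D := (cop HD).

Lemma big_cop_coass (phi : H * H * H -> M) h : balanced3 phi ->
  \sum_(x <- D h) \sum_(y <- D x.1) phi (y.1, y.2, x.2) =
  \sum_(x <- D h) \sum_(y <- D x.2) phi (x.1, y.1, y.2).
Proof.
move=> /eq_big_fcongHHH/(_ (cop_coass HD h)).
rewrite !big_flatten !big_map.
by under eq_bigr do rewrite big_map; under [in RHS]eq_bigr do rewrite big_map.
Qed.

Lemma big_cop_mul (phi : H * H -> M) h k : balanced2 phi ->
  \sum_(z <- D (h * k)) phi z =
  \sum_(x <- D h) \sum_(y <- D k) phi (x.1 * y.1, x.2 * y.2).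
Proof.
move=> /eq_big_fcongHH/(_ (cop_mul HD h k)) ->; rewrite big_flatten big_map.
by apply: eq_bigr => x _; rewrite big_map.
Qed.

Lemma big_cop_cocomm (phi : H * H -> M) h : balanced2 phi ->
  \sum_(z <- D h) phi z = \sum_(z <- D h) phi (z.2, z.1).
Proof. by move=> /eq_big_fcongHH/(_ (cocomm HD h)) ->; rewrite big_map. Qed.

End HopfSums.

Section Antipode.
Variables (F : fieldType) (H : algType F) (HD : cocomHopf H).
Local Notation D := (cop HD).
Local Notation S := (ant HD).
Local Notation ep := (cou HD).

Lemma ant0 : S 0 = 0.
Proof. by have := ant_scale HD 0 0; rewrite !scale0r. Qed.

Lemma ant_sum (I : Type) (r : seq I) (f : I -> H) :
  S (\sum_(i <- r) f i) = \sum_(i <- r) S (f i).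
Proof. exact: (big_morph S (ant_add HD) ant0). Qed.

Lemma ant_counit_l h : S h = \sum_(x <- D h) ep x.1 *: S x.2.
Proof. by rewrite -{1}(counit_l HD h) ant_sum; under eq_bigr do rewrite ant_scale. Qed.

Lemma balanced3_mul3 (f1 f2 f3 : H -> H) : linear f1 -> linear f2 -> linear f3 ->
  balanced3 (fun t => f1 t.1.1 * f2 t.1.2 * f3 t.2).
Proof.
have linD (f : H -> H) : linear f -> forall u v, f (u + v) = f u + f v.
  by move=> fL u v; have := fL 1 u v; rewrite !scale1r.
have linZ (f : H -> H) : linear f -> forall k u, f (k *: u) = k *: f u.
  move=> fL k u; have f0 : f 0 = 0.
    have := linD f fL 0 0; rewrite addr0 => /(congr1 (fun z => z - f 0)).
    by rewrite subrr addrK.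
  by have := fL k u 0; rewrite !addr0 f0 addr0.
move=> f1L f2L f3L; split=> * /=.
- by rewrite (linD _ f1L) !mulrDl.
- by rewrite (linD _ f2L) mulrDr mulrDl.
- by rewrite (linD _ f3L) mulrDr.
- by rewrite (linZ _ f1L) (linZ _ f2L) -scalerAl -scalerAr scalerAl.
- by rewrite (linZ _ f1L) (linZ _ f3L) -!scalerAl -scalerAr.
Qed.

(* Collapsing this sum with antipode_r gives S (h * k); after coassociativity,
   collapsing it with antipode_l gives S k * S h. *)
Let ant_mul_sum h k :=
  \sum_(x <- D h) \sum_(x' <- D x.2) \sum_(y <- D k) \sum_(y' <- D y.2)
     S (x.1 * y.1) * (x'.1 * y'.1) * (S y'.2 * S x'.2).

Lemma ant_mul_sum_counit h k : ant_mul_sum h k = S (h * k).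
Proof.
have hkE : S (h * k) = \sum_(x <- D h) \sum_(y <- D k) (ep x.2 * ep y.2) *: S (x.1 * y.1).
  rewrite -{1}(counit_r HD h) -{1}(counit_r HD k) mulr_suml ant_sum.
  apply: eq_bigr => x _; rewrite mulr_sumr ant_sum; apply: eq_bigr => y _.
  by rewrite -scalerAl -scalerAr !ant_scale scalerA.
rewrite hkE; apply: eq_bigr => x _; rewrite exchange_big; apply: eq_bigr => y _.
under eq_bigr => x' _.
  rewrite (eq_bigr (fun y' => S (x.1 * y.1) * x'.1 * (y'.1 * S y'.2) * S x'.2));
    last by move=> y' _; rewrite !mulrA.
  rewrite -mulr_suml -mulr_sumr (antipode_r HD) -scalerAr mulr1 -scalerAl -mulrA.
  over.
by rewrite -scaler_sumr -mulr_sumr (antipode_r HD) -scalerAr mulr1 scalerA mulrC.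
Qed.

Lemma ant_mul_sum_coass h k : ant_mul_sum h k =
  \sum_(x <- D h) \sum_(y <- D k) \sum_(x' <- D x.1) \sum_(y' <- D y.1)
     S (x'.1 * y'.1) * (x'.2 * y'.2) * (S y.2 * S x.2).
Proof.
have coass_k (a b g : H) :
    \sum_(y <- D k) \sum_(y' <- D y.2) S (a * y.1) * (b * y'.1) * (S y'.2 * g) =
    \sum_(y <- D k) \sum_(y' <- D y.1) S (a * y'.1) * (b * y'.2) * (S y.2 * g).
  symmetry.
  apply: (big_cop_coass HD (phi := fun t => S (a * t.1.1) * (b * t.1.2) * (S t.2 * g))).
  apply: (balanced3_mul3 (f1 := fun x => S (a * x)) (f2 := fun x => b * x)
                         (f3 := fun x => S x * g)) => c u v /=.
  - by rewrite mulrDr ant_add -scalerAr ant_scale.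
  - by rewrite mulrDr -scalerAr.
  - by rewrite ant_add mulrDl ant_scale -scalerAl.
pose phi t := \sum_(y <- D k) \sum_(y' <- D y.2)
                S (t.1.1 * y.1) * (t.1.2 * y'.1) * (S y'.2 * S t.2).
have phiB : balanced3 phi.
  apply: balanced3_sum => y; apply: balanced3_sum => y'.
  apply: (balanced3_mul3 (f1 := fun x => S (x * y.1)) (f2 := fun x => x * y'.1)
                         (f3 := fun x => S y'.2 * S x)) => c u v /=.
  - by rewrite mulrDl ant_add -scalerAl ant_scale.
  - by rewrite mulrDl -scalerAl.
  - by rewrite ant_add mulrDr ant_scale -scalerAr.
rewrite -[LHS]/(\sum_(x <- D h) \sum_(x' <- D x.2) phi (x.1, x'.1, x'.2)).
rewrite -big_cop_coass // /phi /=; apply: eq_bigr => x _.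
by under eq_bigr do rewrite coass_k; apply: exchange_big.
Qed.

Lemma ant_mul_sum_antipode h k : ant_mul_sum h k = S k * S h.
Proof.
rewrite ant_mul_sum_coass.
transitivity (\sum_(x <- D h) \sum_(y <- D k) (ep x.1 * ep y.1) *: (S y.2 * S x.2)).
  apply: eq_bigr => x _; apply: eq_bigr => y _.
  have := big_cop_mul HD (phi := fun z => S z.1 * z.2 * (S y.2 * S x.2)) x.1 y.1.
  rewrite /= => <-; last first.
    split=> * /=; first by rewrite ant_add !mulrDl.
      by rewrite mulrDr mulrDl.
    by rewrite ant_scale -!scalerAl -scalerAr -scalerAl.
  by rewrite -mulr_suml (antipode_l HD) cou_mul -scalerAl mul1r.
rewrite (ant_counit_l k) (ant_counit_l h) mulr_suml exchange_big.
apply: eq_bigr => x _; rewrite mulr_sumr; apply: eq_bigr => y _.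
by rewrite -scalerAl -scalerAr scalerA mulrC.
Qed.

Lemma ant_mul h k : S (h * k) = S k * S h.
Proof. by rewrite -ant_mul_sum_counit ant_mul_sum_antipode. Qed.

End Antipode.

Section PseudoTensors.
Variables (F : fieldType) (H : algType F) (HD : cocomHopf H) (V : lmodType F).
Variable P : poissonPseudo HD V.
Local Notation D := (cop HD).
Local Notation act := (act P).
Local Notation "s ≈ t" := (fcong (relT2 D act) s t) (at level 70).

Lemma act0l v : act 0 v = 0.
Proof. by have := act_scalel P 0 0 v; rewrite !scale0r. Qed.

Lemma act_suml (I : Type) (r : seq I) (f : I -> H) v :
  act (\sum_(i <- r) f i) v = \sum_(i <- r) act (f i) v.
Proof. exact: (big_morph (act^~ v) (fun h k => act_addl P h k v) (act0l v)). Qed.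

Lemma fcong_zero2 f e : [:: (f, 0, e)] ≈ [::].
Proof.
apply: fc_trans (fc_rel (r2_zero1 D act 0 e)).
by have := fc_rel (r2_sc2 D act 0 f 0 e); rewrite scale0r scaler0 => /fc_sym.
Qed.

Lemma fcong_zero3 f g : [:: (f, g, 0)] ≈ [::].
Proof.
apply: fc_trans (fc_rel (r2_zero1 D act g 0)).
by have := fc_rel (r2_sc3 D act 0 f g 0); rewrite !scale0r => /fc_sym.
Qed.

Lemma fcong_sum3 (I : Type) f g (Z : I -> V) (r : seq I) :
  [seq (f, g, Z i) | i <- r] ≈ [:: (f, g, \sum_(i <- r) Z i)].
Proof.
elim: r => [|i r IH]; rewrite ?big_nil ?big_cons /=; first exact: fc_sym (fcong_zero3 f g).
apply: fc_trans (fc_sym (fc_rel (r2_add3 D act f g _ _))).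
exact: (fc_cat (fc_refl _ [:: (f, g, Z i)]) IH).
Qed.

Lemma map_tensor23_fcong (f : H) (Q : H -> V) :
  (forall x y, Q (x + y) = Q x + Q y) -> (forall (k : F) x, Q (k *: x) = k *: Q x) ->
  forall s t, fcong (@relHH F H) s t ->
  [seq (f, z.1, Q z.2) | z <- s] ≈ [seq (f, z.1, Q z.2) | z <- t].
Proof.
move=> QD QZ; apply: fcong_lift_map => s t [x y b|a x y|k a b|b] /=.
- exact: fc_rel (r2_add2 _ _ _ _ _ _).
- by rewrite QD; apply: fc_rel (r2_add3 _ _ _ _ _ _).
- rewrite QZ; apply: fc_trans (fc_sym (fc_rel (r2_sc2 _ _ _ _ _ _))) _.
  exact: fc_rel (r2_sc3 _ _ _ _ _ _).
- exact: fcong_zero2.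
Qed.

Lemma map_tensor12_fcong (f g : H) (e : V) s t : fcong (@relHH F H) s t ->
  [seq (f * z.1, g * z.2, e) | z <- s] ≈ [seq (f * z.1, g * z.2, e) | z <- t].
Proof.
apply: fcong_lift_map => {}s {}t [x y b|a x y|k a b|b] /=; rewrite ?mulrDr ?mulr0.
- exact: fc_rel (r2_add1 _ _ _ _ _ _).
- exact: fc_rel (r2_add2 _ _ _ _ _ _).
- by rewrite -!scalerAr; apply: fc_rel (r2_sc2 _ _ _ _ _ _).
- exact: fc_rel (r2_zero1 _ _ _ _).
Qed.

Lemma map_tensor123_fcong (f g : H) (Q : H -> V) :
  (forall x y, Q (x + y) = Q x + Q y) -> (forall (k : F) x, Q (k *: x) = k *: Q x) ->
  forall s t, fcong (@relHHH F H) s t ->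
  [seq (f * z.1.1, g * z.1.2, Q z.2) | z <- s] ≈
  [seq (f * z.1.1, g * z.1.2, Q z.2) | z <- t].
Proof.
move=> QD QZ; apply: fcong_lift_map => s t [x y b c|a x y c|a b x y|k a b c|k a b c|b c] /=;
  rewrite ?mulrDr ?mulr0 ?QD ?QZ -?scalerAr.
- exact: fc_rel (r2_add1 _ _ _ _ _ _).
- exact: fc_rel (r2_add2 _ _ _ _ _ _).
- exact: fc_rel (r2_add3 _ _ _ _ _ _).
- exact: fc_rel (r2_sc2 _ _ _ _ _ _).
- exact: fc_rel (r2_sc3 _ _ _ _ _ _).
- exact: fc_rel (r2_zero1 _ _ _ _).
Qed.

Lemma swapT2_fcong s t : s ≈ t -> swapT2 s ≈ swapT2 t.
Proof.
apply: fcong_lift_map => {}s {}t [x y g e|f x y e|f g x y|k f g e|k f g e|g e|f g h e] /=.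
- exact: fc_rel (r2_add2 _ _ _ _ _ _).
- exact: fc_rel (r2_add1 _ _ _ _ _ _).
- exact: fc_rel (r2_add3 _ _ _ _ _ _).
- exact: fc_sym (fc_rel (r2_sc2 _ _ _ _ _ _)).
- exact: fc_trans (fc_sym (fc_rel (r2_sc2 D act k g f e))) (fc_rel (r2_sc3 D act k g f e)).
- exact: fcong_zero2.
- have := map_tensor12_fcong g f e (fc_sym (cocomm HD h)).
  by rewrite -!map_comp => /fc_trans; apply; apply: fc_rel (r2_bal _ _ _ _ _ _).
Qed.

Lemma scaleT2_fcong (k : F) s t : s ≈ t -> scaleT2 k s ≈ scaleT2 k t.
Proof.
apply: fcong_lift_map => {}s {}t [x y g e|f x y e|f g x y|c f g e|c f g e|g e|f g h e] /=;
  rewrite ?scalerDr ?scaler0.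
- exact: fc_rel (r2_add1 _ _ _ _ _ _).
- exact: fc_rel (r2_add2 _ _ _ _ _ _).
- exact: fc_rel (r2_add3 _ _ _ _ _ _).
- by rewrite scalerA mulrC -scalerA; apply: fc_rel (r2_sc2 _ _ _ _ _ _).
- by rewrite scalerA mulrC -scalerA; apply: fc_rel (r2_sc3 _ _ _ _ _ _).
- exact: fc_rel (r2_zero1 _ _ _ _).
- rewrite -map_comp; under eq_map => x do rewrite /= scalerAl.
  exact: fc_rel (r2_bal _ _ _ _ _ _).
Qed.

Lemma swapT2_scaleT2 (k : F) s : swapT2 (scaleT2 k s) ≈ scaleT2 k (swapT2 s).
Proof.
rewrite /swapT2 /scaleT2 -!map_comp; apply: fcong_map => t /=.
exact: fc_sym (fc_rel (r2_sc2 _ _ _ _ _ _)).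
Qed.

End PseudoTensors.

Section TensorOps.
Variables (F : fieldType) (H : algType F) (V : lmodType F).
Variables (cop : H -> seq (H * H)) (act : H -> V -> V) (ant : H -> H).
Implicit Types (s t : seq (H * H * V)) (m : V -> V -> V).

Lemma scaleT2_cat (k : F) s t : scaleT2 k (s ++ t) = scaleT2 k s ++ scaleT2 k t.
Proof. exact: map_cat. Qed.

Lemma swapT2_cat s t : swapT2 (s ++ t) = swapT2 s ++ swapT2 t.
Proof. exact: map_cat. Qed.

Lemma scaleT2M (a b : F) s : scaleT2 a (scaleT2 b s) = scaleT2 (a * b) s.
Proof. by rewrite /scaleT2 -map_comp; apply: eq_map => t /=; rewrite scalerA. Qed.

Lemma scaleT21 s : scaleT2 1 s = s.
Proof. by rewrite /scaleT2 -[RHS]map_id; apply: eq_map => -[[f g] e] /=; rewrite scale1r. Qed.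

Lemma lmulT_cat m a s t :
  lmulT cop act ant m a (s ++ t) = lmulT cop act ant m a s ++ lmulT cop act ant m a t.
Proof. by rewrite /lmulT map_cat flatten_cat. Qed.

Lemma rmulT_scaleT2 m (k : F) s c :
  rmulT cop act ant m (scaleT2 k s) c = scaleT2 k (rmulT cop act ant m s c).
Proof.
rewrite /rmulT /scaleT2 map_flatten -!map_comp; congr flatten; apply: eq_map => t /=.
by rewrite -map_comp.
Qed.

Lemma swapT2_rmulT_swapT2 m s a :
  swapT2 (rmulT cop act ant m (swapT2 s) a) = lmulT cop act ant (fun u v => m v u) a s.
Proof.
rewrite /swapT2 /rmulT /lmulT map_flatten -!map_comp; congr flatten; apply: eq_map => t /=.
by rewrite -map_comp.
Qed.

End TensorOps.

Section RightMultiplication.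
Variables (F : fieldType) (H : algType F) (HD : cocomHopf H) (V : lmodType F).
Variable P : poissonPseudo HD V.
Local Notation D := (cop HD).
Local Notation S := (ant HD).
Local Notation act := (act P).
Local Notation "s ≈ t" := (fcong (relT2 D act) s t) (at level 70).

Variable m : V -> V -> V.
Hypothesis m_addl : forall u u' v, m (u + u') v = m u v + m u' v.
Hypothesis m_addr : forall u v v', m u (v + v') = m u v + m u v'.
Hypothesis m_scalel : forall (k : F) u v, m (k *: u) v = k *: m u v.
Hypothesis m_scaler : forall (k : F) u v, m u (k *: v) = k *: m u v.
Hypothesis act_m : forall h u v, act h (m u v) = \sum_(x <- D h) m (act x.1 u) (act x.2 v).

Local Notation rmul := (rmulT D act S m).

Lemma act_m_ant h e w : \sum_(x <- D h) act x.1 (m e (act (S x.2) w)) = m (act h e) w.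
Proof.
have m0l v : m 0 v = 0 by have := m_scalel 0 0 v; rewrite !scale0r.
have m0r u : m u 0 = 0 by have := m_scaler 0 u 0; rewrite !scale0r.
have m_sumr u (r : seq (H * H)) (G : H * H -> V) :
    m u (\sum_(i <- r) G i) = \sum_(i <- r) m u (G i).
  by elim: r => [|i r IH]; rewrite ?big_nil ?m0r // !big_cons m_addr IH.
rewrite (eq_bigr (fun x => \sum_(y <- D x.1) m (act y.1 e) (act (y.2 * S x.2) w)));
  last by move=> x _; rewrite act_m; apply: eq_bigr => y _; rewrite act_mul.
rewrite (big_cop_coass HD (phi := fun t => m (act t.1.1 e) (act (t.1.2 * S t.2) w))); last first.
  split=> * /=.
  - by rewrite act_addl m_addl.
  - by rewrite mulrDl act_addl m_addr.
  - by rewrite ant_add mulrDr act_addl m_addr.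
  - by rewrite act_scalel m_scalel -scalerAl act_scalel m_scaler.
  - by rewrite act_scalel m_scalel ant_scale -scalerAr act_scalel m_scaler.
rewrite -{2}(counit_r HD h) act_suml (big_morph (m^~ w) (fun u u' => m_addl u u' w) (m0l w)).
apply: eq_bigr => x _ /=; rewrite -m_sumr -act_suml (antipode_r HD).
by rewrite !act_scalel act_one m_scaler m_scalel.
Qed.

Let m_ant_add e w x y :
  m e (act (S (x + y)) w) = m e (act (S x) w) + m e (act (S y) w).
Proof. by rewrite ant_add act_addl m_addr. Qed.

Let m_ant_scale e w (k : F) x : m e (act (S (k *: x)) w) = k *: m e (act (S x) w).
Proof. by rewrite ant_scale act_scalel m_scaler. Qed.

Lemma rmulT_coass_bal (f g : H) (e w : V) h :
  [seq (f * x.1, g * y.1, m e (act (S y.2) w)) | x <- D h, y <- D x.2] ≈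
  [:: (f, g, m (act h e) w)].
Proof.
have := map_tensor123_fcong P f g (m_ant_add e w) (m_ant_scale e w) (fc_sym (cop_coass HD h)).
rewrite !map_allpairs /= => /fc_trans; apply.
apply: fc_trans (fcong_flatten_map
  (g := fun x : H * H => [:: (f, g, act x.1 (m e (act (S x.2) w)))]) _ _) _.
  by move=> x; apply: fc_rel (r2_bal _ _ _ _ _ _).
rewrite flatten_map1; apply: fc_trans (fcong_sum3 P _ _ _ _) _.
by rewrite act_m_ant; apply: fc_refl.
Qed.

Lemma rmulT_bal f g h e c :
  rmul [seq (f * x.1, g * x.2, e) | x <- D h] c ≈ rmul [:: (f, g, act h e)] c.
Proof.
rewrite /rmulT /= cats0 -map_comp.
apply: fc_trans (fcong_flatten_map (g := fun x : H * H =>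
    [seq (f * x.1, u.1 * v.1, m e (act (S v.2) (act (S u.2) c))) | u <- D g, v <- D x.2]) _ _) _.
  move=> x; have := map_tensor23_fcong P (f * x.1) (m_ant_add e c) (m_ant_scale e c)
    (cop_mul HD g x.2).
  rewrite map_allpairs => /fc_trans; apply; apply: fcong_eq.
  by congr flatten; apply: eq_map => u; apply: eq_map => v /=; rewrite ant_mul act_mul.
apply: fc_trans (fcong_perm _ (perm_flatten_exchange _ _ _)) _.
rewrite -[X in _ ≈ X]flatten_map1; apply: fcong_flatten_map => u.
exact: rmulT_coass_bal.
Qed.

Lemma rmulT_fcong c s t : s ≈ t -> rmul s c ≈ rmul t c.
Proof.
apply: fcong_lift => {}s {}t [x y g e|f x y e|f g x y|k f g e|k f g e|g e|f g h e];
  last exact: rmulT_bal.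
all: rewrite /= ?cats0.
- apply: fc_trans (fcong_map_flatten _ _) (fcong_perm _ (perm_flatten_pair _ _ _)).
  by move=> z; apply: fc_rel (r2_add1 _ _ _ _ _ _).
- have := map_tensor23_fcong P f (m_ant_add e c) (m_ant_scale e c) (cop_add HD x y).
  by rewrite map_cat.
- apply: fc_trans (fcong_map_flatten _ _) (fcong_perm _ (perm_flatten_pair _ _ _)).
  by move=> z; rewrite m_addl; apply: fc_rel (r2_add3 _ _ _ _ _ _).
- have := map_tensor23_fcong P f (m_ant_add e c) (m_ant_scale e c) (cop_scale HD k g).
  rewrite -map_comp => /fc_sym/(fc_trans _); apply.
  by apply: fcong_map => z; apply: fc_rel (r2_sc2 _ _ _ _ _ _).
- by apply: fcong_map => z; rewrite m_scalel; apply: fc_rel (r2_sc3 _ _ _ _ _ _).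
- elim: (D g) => [|z r IH]; first exact: fc_refl.
  exact: (fc_cat (fc_rel (r2_zero1 D act _ _)) IH).
Qed.

End RightMultiplication.

Section RightLeibniz.
Variables (F : fieldType) (H : algType F) (HD : cocomHopf H) (V : lmodType F).
Variable P : poissonPseudo HD V.
Local Notation D := (cop HD).
Local Notation S := (ant HD).
Local Notation act := (act P).
Local Notation pm := (pmul P).
Local Notation "s ≈ t" := (fcong (relT2 D act) s t) (at level 70).
Local Notation rmul := (rmulT D act S pm).
Local Notation lmul := (lmulT D act S pm).

Lemma act_pmul_flip h u v : act h (pm v u) = \sum_(x <- D h) pm (act x.2 v) (act x.1 u).
Proof.
rewrite act_pmul (big_cop_cocomm HD (phi := fun z => pm (act z.1 v) (act z.2 u))) //.
split=> * /=; first by rewrite act_addl pmul_addl.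
  by rewrite act_addl pmul_addr.
by rewrite !act_scalel pmul_scalel pmul_scaler.
Qed.

Lemma rmulT_pmul_fcong c s t : s ≈ t -> rmul s c ≈ rmul t c.
Proof.
move=> st; apply: (rmulT_fcong _ _ _ _ (act_pmul P) c st).
- exact: pmul_addl.
- exact: pmul_addr.
- exact: pmul_scalel.
- exact: pmul_scaler.
Qed.

Lemma lmulT_pmul_fcong a s t : s ≈ t -> lmul a s ≈ lmul a t.
Proof.
move=> /swapT2_fcong st.
have := swapT2_fcong (rmulT_fcong (m := fun u v => pm v u) (fun u u' v => pmul_addr P v u u')
  (fun u v v' => pmul_addl P v v' u) (fun k u v => pmul_scaler P k v u)
  (fun k u v => pmul_scalel P k v u) act_pmul_flip a st).
by rewrite !swapT2_rmulT_swapT2.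
Qed.

Lemma lmulT_supercomm q py y s : par P py y -> (forall t, List.In t s -> par P q t.2) ->
  lmulT D act S (fun u v => pm v u) y s ≈ scaleT2 ((-1) ^+ (q && py)) (lmul y s).
Proof.
move=> hy; elim: s => [|t s IH] hs; first exact: fc_refl.
rewrite /lmulT /= scaleT2_cat; apply: fc_cat; last by apply: IH => u su; apply: hs; right.
rewrite /scaleT2 -map_comp; apply: fcong_map => x /=.
rewrite (pmul_supercomm (hs t (or_introl erefl)) (act_par _ hy)).
exact: fc_sym (fc_rel (r2_sc3 _ _ _ _ _ _)).
Qed.

Lemma swapT2_rmulT_br px py pz x y z : par P px x -> par P py y -> par P pz z ->
  swapT2 (rmul (br P z x) y) ≈
  scaleT2 (- (-1) ^+ (px && pz) * (-1) ^+ ((px (+) pz) && py)) (lmul y (br P x z)).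
Proof.
move=> hx hy hz; have [s [xzs sq]] := br_even hx hz.
have zxs := fc_trans (br_skew hx hz) (scaleT2_fcong _ (swapT2_fcong xzs)).
apply: fc_trans (swapT2_fcong (rmulT_pmul_fcong y zxs)) _.
rewrite rmulT_scaleT2; apply: fc_trans (swapT2_scaleT2 P _ _) _.
rewrite swapT2_rmulT_swapT2 -scaleT2M; apply: scaleT2_fcong.
apply: fc_trans (lmulT_supercomm hy sq) _.
exact: scaleT2_fcong (lmulT_pmul_fcong y (fc_sym xzs)).
Qed.

Lemma leibniz_right_homogeneous pa pb pc a b c :
  par P pa a -> par P pb b -> par P pc c ->
  br P (pm a b) c ≈ lmul a (br P b c) ++ scaleT2 ((-1) ^+ (pa && pb)) (lmul b (br P a c)).
Proof.
move=> ha hb hc.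
apply: fc_trans (br_skew hc (pmul_par ha hb)) _.
apply: fc_trans (scaleT2_fcong _ (swapT2_fcong (br_leibniz hc ha hb))) _.
rewrite swapT2_cat scaleT2_cat; apply: fc_trans (fc_comm _ _ _) _; apply: fc_cat.
- apply: fc_trans (scaleT2_fcong _ (swapT2_scaleT2 P _ _)) _; rewrite scaleT2M.
  apply: fc_trans (scaleT2_fcong _ (swapT2_rmulT_br hb ha hc)) _; rewrite scaleT2M.
  rewrite -[X in _ ≈ X]scaleT21; apply: fcong_eq; congr scaleT2.
  by clear ha hb hc; case: pa; case: pb; case: pc; rewrite /= ?expr0 ?expr1; ring.
- apply: fc_trans (scaleT2_fcong _ (swapT2_rmulT_br ha hb hc)) _; rewrite scaleT2M.
  apply: fcong_eq; congr scaleT2.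
  by clear ha hb hc; case: pa; case: pb; case: pc; rewrite /= ?expr0 ?expr1; ring.
Qed.

End RightLeibniz.

Unset Implicit Arguments.

Theorem lemma4p7 (F : fieldType) (charF0 : [pchar F] =i pred0)
  (H : algType F) (HD : cocomHopf H) (V : lmodType F) (P : poissonPseudo HD V)
  (pa pb : bool) (a b c : V) :
  par P pa a -> par P pb b ->
  fcong (relT2 (cop HD) (act P)) (br P (pmul P a b) c)
    (lmulT (cop HD) (act P) (ant HD) (pmul P) a (br P b c) ++
     scaleT2 ((-1) ^+ (pa && pb))
       (lmulT (cop HD) (act P) (ant HD) (pmul P) b (br P a c))).
Proof.
move=> ha hb; have [c0 [c1 [hc0 hc1 ->]]] := par_decomp P c.
apply: fc_trans (br_addr P _ _ _) _.
apply: fc_trans (fc_cat (leibniz_right_homogeneous ha hb hc0)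
                        (leibniz_right_homogeneous ha hb hc1)) _.
apply: fc_sym; apply: fc_trans (fc_cat (lmulT_pmul_fcong a (br_addr P b c0 c1))
                          (scaleT2_fcong _ (lmulT_pmul_fcong b (br_addr P a c0 c1)))) _.
by rewrite !lmulT_cat scaleT2_cat; apply: fcong_perm; rewrite perm_catACA.
Qed.
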